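(* With notation as in the context, the map sending $v=(v_{L^\circ})_{L^\circ\in OLag(V_1\times V_2)}\in\mathcal H(V_1\times V_2)$ to the family $\big(r^*_{(L_1^\circ,L_2^\circ)}(v_{s(L_1^\circ,L_2^\circ)})\big)_{(L_1^\circ,L_2^\circ)\in OLag(V_1)\times OLag(V_2)}$ is a linear isomorphism $$\alpha_{V_1\times V_2}:\mathcal H(V_1\times V_2)\xrightarrow{\ \simeq\ }\mathcal H(V_1)\otimes\mathcal H(V_2),$$ where $\mathcal H(V_1)\otimes\mathcal H(V_2)$ is identified with the space of families $(w_{(L_1^\circ,L_2^\circ)}\in\mathcal H_{L_1^\circ}(V_1)\otimes\mathcal H_{L_2^\circ}(V_2))$ satisfying $(T^{V_1}_{M_1^\circ,L_1^\circ}\otimes T^{V_2}_{M_2^\circ,L_2^\circ})w_{(L_1^\circ,L_2^\circ)}=w_{(M_1^\circ,M_2^\circ)}$ for all pairs. This isomorphism is natural and intertwines $\rho_{V_1\times V_2}$ restricted to $Sp(V_1)\times Sp(V_2)$ with $\rho_{V_1}\otimes\rho_{V_2}$.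
   Context: $q$ is a power of an odd prime. For a symplectic space $(V,\omega)$ of dimension $2n$ over $\mathbb F_q$: $H(V)$ is $V\times\mathbb F_q$ with $(v,z)(v',z')=(v+v',z+z'+\tfrac12\omega(v,v'))$; $\psi$ is a fixed non-trivial character of $\mathbb F_q$; an oriented Lagrangian is $L^\circ=(L,o_L)$ with $L$ Lagrangian and $o_L\in\bigwedge^nL$ nonzero, $OLag(V)$ their set; $\mathcal H_{L^\circ}(V)$ is the space of $f:H(V)\to\mathbb C$ with $f((0,z)(l,0)h)=\psi(z)f(h)$, with $H(V)$ acting by right translation. $\omega_\wedge(a_1\wedge\dots\wedge a_n,b_1\wedge\dots\wedge b_n)=(-1)^{n(n-1)/2}\det(\omega(a_i,b_j))$; $\sigma$ the Legendre character; $G_1=\sum_z\psi(\tfrac12z^2)$. For $M+L=V$ set $T^0_{M^\circ,L^\circ}f(h)=(G_1/q)^n\sigma((-1)^{n(n-1)/2}\omega_\wedge(o_L,o_M))\sum_{m\in M}f((m,0)h)$. The canonical trivialization $T^V$ is the unique family of $H(V)$-intertwining isomorphisms $T^V_{M^\circ,L^\circ}:\mathcal H_{L^\circ}(V)\to\mathcal H_{M^\circ}(V)$ with $T^V_{N^\circ,M^\circ}T^V_{M^\circ,L^\circ}=T^V_{N^\circ,L^\circ}$ always and $T^V=T^0$ on general-position pairs. $\mathcal H(V)$ is the space of families $(v_{L^\circ}\in\mathcal H_{L^\circ}(V))$ with $T^V_{M^\circ,L^\circ}v_{L^\circ}=v_{M^\circ}$; $Sp(V)$ acts on it by $\rho_V(g)(v)_{L^\circ}=v_{gL^\circ}\circ\tilde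 g^{-1}$... more precisely $\rho_V(g)=\mathcal H(g^{-1})$, where for an isomorphism $f:V\to V'$, $\mathcal H(f)(v)_{L^\circ}=v_{f(L^\circ)}\circ r_f$ with $r_f(v,z)=(f(v),z)$. For $V_1\times V_2$ (form $\omega_1\oplus\omega_2$): $r((v_1,z_1),(v_2,z_2))=((v_1,v_2),z_1+z_2)$, $s(L_1^\circ,L_2^\circ)=(L_1\times L_2,o_{L_1}\wedge o_{L_2})$, and $r^*_{(L_1^\circ,L_2^\circ)}(g)=g\circ r\in\mathcal H_{L_1^\circ}(V_1)\otimes\mathcal H_{L_2^\circ}(V_2)$. *)

From HB Require Import structures.
From mathcomp Require Import all_boot all_order all_algebra all_field.
Set Implicit Arguments. Unset Strict Implicit. Unset Printing Implicit Defensive.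
Import Order.TTheory GRing.Theory Num.Theory.
Local Open Scope ring_scope.

(* Model: a symplectic space (V, omega) of dimension m = 2n over the finite
   field F is 'rV[F]_m with omega(v,w) = v Om w^T, Om alternating invertible.
   Linear maps act on row vectors on the right: f(v) = v *m g.
   A Lagrangian L with orientation o_L = b_1 /\ ... /\ b_n is presented by a
   "frame" B : 'M_(n,m) whose rows b_i form a basis of L.  Families indexed
   by OLag(V) are presented as functions on frames. *)

Section Defs.
Variable F : finFieldType.

Definition nontriv_add_char (psi : F -> algC) :=
  (forall a b, psi (a + b) = psi a * psi b) /\ exists a, psi a != 1.

Definition symplectic (n m : nat) (Om : 'M[F]_m) :=
  [/\ m = (n + n)%N, Om^T = - Om, forall i, Om i i = 0 & Om \in unitmx].

Definition omega m (Om : 'M[F]_m) (v w : 'rV[F]_m) : F := (v *m Om *m w^T) 0 0.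

Definition heis m := ('rV[F]_m * F)%type.

Definition hmul m (Om : 'M[F]_m) (x y : heis m) : heis m :=
  (x.1 + y.1, x.2 + y.2 + (2%:R)^-1 * omega Om x.1 y.1).

(* B is a frame of an (oriented) Lagrangian: n independent rows spanning an
   isotropic subspace (Lagrangian since dim V = 2n). *)
Definition frame n m (Om : 'M[F]_m) (B : 'M[F]_(n, m)) :=
  (\rank B == n) && (B *m Om *m B^T == 0).

Definition inHL (psi : F -> algC) n m (Om : 'M[F]_m) (B : 'M[F]_(n, m))
    (f : heis m -> algC) :=
  forall (l : 'rV[F]_m) (z : F) (h : heis m), (l <= B)%MS ->
    f (hmul Om (0, z) (hmul Om (l, 0) h)) = psi z * f h.

Definition rtrans m (Om : 'M[F]_m) (h : heis m) (f : heis m -> algC) :=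
  fun x => f (hmul Om x h).

(* omega_wedge(o_L, o_M) for o_L = wedge of rows of BL, o_M = wedge of rows of BM *)
Definition owedge n m (Om : 'M[F]_m) (BL BM : 'M[F]_(n, m)) : F :=
  (-1) ^+ 'C(n, 2) * \det (BL *m Om *m BM^T).

Definition legendre (a : F) : algC :=
  if a == 0 then 0 else if [exists b : F, b ^+ 2 == a] then 1 else -1.

Definition G1 (psi : F -> algC) : algC := \sum_(z : F) psi ((2%:R)^-1 * z ^+ 2).

Definition T0 (psi : F -> algC) n m (Om : 'M[F]_m) (BM BL : 'M[F]_(n, m))
    (f : heis m -> algC) : heis m -> algC :=
  fun h => (G1 psi / (#|F|%:R)) ^+ n
           * legendre ((-1) ^+ 'C(n, 2) * owedge Om BL BM)
           * \sum_(x : 'rV[F]_m | (x <= BM)%MS) f (hmul Om (x, 0) h).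

Definition general_position n m (BM BL : 'M[F]_(n, m)) :=
  \rank (col_mx BM BL) == m.

Definition triv n m :=
  'M[F]_(n, m) -> 'M[F]_(n, m) -> (heis m -> algC) -> (heis m -> algC).

(* T is the canonical trivialization T^V (T M L is T^V_{M°,L°}) *)
Definition canonical_triv (psi : F -> algC) n m (Om : 'M[F]_m) (T : triv n m) :=
  [/\ (forall M L, frame Om M -> frame Om L -> forall f,
          inHL psi Om L f -> inHL psi Om M (T M L f)),
      (forall M L, frame Om M -> frame Om L -> forall (a : algC) f g,
          inHL psi Om L f -> inHL psi Om L g ->
          T M L (fun x => a * f x + g x) = (fun x => a * T M L f x + T M L g x)),
      (forall M L, frame Om M -> frame Om L -> forall h f,
          inHL psi Om L f -> T M L (rtrans Om h f) = rtrans Om h (T M L f)),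
      (forall M L, frame Om M -> frame Om L ->
          (forall f g, inHL psi Om L f -> inHL psi Om L g -> T M L f = T M L g -> f = g)
          /\ (forall g, inHL psi Om M g -> exists f, inHL psi Om L f /\ T M L f = g)) /\
      (forall N M L, frame Om N -> frame Om M -> frame Om L -> forall f,
          inHL psi Om L f -> T N M (T M L f) = T N L f) &
      (forall M L, frame Om M -> frame Om L -> general_position M L -> forall f,
          inHL psi Om L f -> T M L f = T0 psi Om M L f)].

Definition inHV (psi : F -> algC) n m (Om : 'M[F]_m) (T : triv n m)
    (v : 'M[F]_(n, m) -> heis m -> algC) :=
  (forall B, frame Om B -> inHL psi Om B (v B)) /\
  (forall M L, frame Om M -> frame Om L -> T M L (v L) = v M).

(* H_{L1°}(V1) (x) H_{L2°}(V2), realised as functions on H(V1) x H(V2) *)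
Definition inHL2 (psi : F -> algC) n1 m1 n2 m2 (Om1 : 'M[F]_m1) (Om2 : 'M[F]_m2)
    (B1 : 'M[F]_(n1, m1)) (B2 : 'M[F]_(n2, m2)) (w : heis m1 -> heis m2 -> algC) :=
  (forall h2, inHL psi Om1 B1 (fun h1 => w h1 h2)) /\
  (forall h1, inHL psi Om2 B2 (w h1)).

Definition tensT n1 m1 n2 m2 (T1 : triv n1 m1) (T2 : triv n2 m2)
    M1 L1 M2 L2 (w : heis m1 -> heis m2 -> algC) : heis m1 -> heis m2 -> algC :=
  fun h1 h2 => T1 M1 L1 (fun h1' => T2 M2 L2 (w h1') h2) h1.

Definition tfam n1 m1 n2 m2 :=
  'M[F]_(n1, m1) -> 'M[F]_(n2, m2) -> heis m1 -> heis m2 -> algC.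

Definition inHT (psi : F -> algC) n1 m1 n2 m2 (Om1 : 'M[F]_m1) (Om2 : 'M[F]_m2)
    (T1 : triv n1 m1) (T2 : triv n2 m2) (w : tfam n1 m1 n2 m2) :=
  (forall B1 B2, frame Om1 B1 -> frame Om2 B2 -> inHL2 psi Om1 Om2 B1 B2 (w B1 B2)) /\
  (forall M1 L1 M2 L2, frame Om1 M1 -> frame Om1 L1 -> frame Om2 M2 -> frame Om2 L2 ->
     tensT T1 T2 M1 L1 M2 L2 (w L1 L2) = w M1 M2).

Definition prodform m1 m2 (Om1 : 'M[F]_m1) (Om2 : 'M[F]_m2) : 'M[F]_(m1 + m2) :=
  block_mx Om1 0 0 Om2.

Definition sLag n1 m1 n2 m2 (B1 : 'M[F]_(n1, m1)) (B2 : 'M[F]_(n2, m2))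
  : 'M[F]_(n1 + n2, m1 + m2) := block_mx B1 0 0 B2.

Definition rmap m1 m2 (x1 : heis m1) (x2 : heis m2) : heis (m1 + m2) :=
  (row_mx x1.1 x2.1, x1.2 + x2.2).

Definition alpha n1 m1 n2 m2 (v : 'M[F]_(n1 + n2, m1 + m2) -> heis (m1 + m2) -> algC)
  : tfam n1 m1 n2 m2 :=
  fun B1 B2 h1 h2 => v (sLag B1 B2) (rmap h1 h2).

Definition Hfun n m (g : 'M[F]_m) (v : 'M[F]_(n, m) -> heis m -> algC)
  : 'M[F]_(n, m) -> heis m -> algC :=
  fun B x => v (B *m g) (x.1 *m g, x.2).

Definition Hfun2 n1 m1 n2 m2 (g1 : 'M[F]_m1) (g2 : 'M[F]_m2) (w : tfam n1 m1 n2 m2)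
  : tfam n1 m1 n2 m2 :=
  fun B1 B2 h1 h2 => w (B1 *m g1) (B2 *m g2) (h1.1 *m g1, h1.2) (h2.1 *m g2, h2.2).

Definition rho n m (g : 'M[F]_m) v := @Hfun n m (invmx g) v.
Definition rho2 n1 m1 n2 m2 (g1 : 'M[F]_m1) (g2 : 'M[F]_m2) w :=
  @Hfun2 n1 m1 n2 m2 (invmx g1) (invmx g2) w.

Definition symp_iso m (Om Om' : 'M[F]_m) (g : 'M[F]_m) :=
  (g \in unitmx) && (g *m Om' *m g^T == Om).

Definition Sp m (Om : 'M[F]_m) (g : 'M[F]_m) := symp_iso Om Om g.

End Defs.

From HB Require Import structures.
From mathcomp Require Import all_boot all_order all_algebra all_field.
From mathcomp Require fingroup cyclic.
From Stdlib Require Import FunctionalExtensionality.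
Set Implicit Arguments. Unset Strict Implicit. Unset Printing Implicit Defensive.
Import GRing.Theory Num.Theory.
Local Open Scope ring_scope.

(* Everything rests on one identity (canonical_triv_sLag): on product
   Lagrangians s(L1, L2), the canonical trivialization of V1 x V2 restricts
   along r to the tensor product T^{V1} (x) T^{V2}.  To prove it we
   1. show that any two Lagrangians X, Z of a symplectic space admit a third
      one Y in general position with both (a greedy construction of an
      isotropic subspace avoiding X and Z, using 2 != 0);
   2. deduce T^V_{Z,X} = T^0_{Z,Y} T^0_{Y,X} from the cocycle property;
   3. check that the explicit T^0 of product Lagrangians factors as
      T^0 (x) T^0: the sum over M1 x M2 splits, the Gram determinant is block
      diagonal and the Legendre symbol is multiplicative (the unit group of
      F is cyclic).
   Then alpha lands in H(V1) (x) H(V2); it is injective since a compatible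
   family is determined by one component and r is onto, and surjective since
   any w in H_{L1}(V1) (x) H_{L2}(V2) descends along r and extends to a
   family via T^{V1 x V2}. *)

Section ProductSpace.
Variable F : finFieldType.

Lemma omega_row_mx m1 m2 (Om1 : 'M[F]_m1) (Om2 : 'M[F]_m2) x1 x2 y1 y2 :
  omega (prodform Om1 Om2) (row_mx x1 x2) (row_mx y1 y2) =
  omega Om1 x1 y1 + omega Om2 x2 y2.
Proof.
rewrite /omega /prodform mul_row_block !mulmx0 addr0 add0r tr_row_mx mul_row_col.
by rewrite mxE.
Qed.

Lemma rmapM m1 m2 (Om1 : 'M[F]_m1) (Om2 : 'M[F]_m2) a1 b1 a2 b2 :
  rmap (hmul Om1 a1 b1) (hmul Om2 a2 b2) =
  hmul (prodform Om1 Om2) (rmap a1 a2) (rmap b1 b2).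
Proof.
rewrite /rmap /hmul /= omega_row_mx add_row_mx mulrDr; congr (_, _).
by rewrite addrACA (addrACA a1.2).
Qed.

Lemma hmul0z m (Om : 'M[F]_m) z (x : 'rV[F]_m) s : hmul Om (0, z) (x, s) = (x, z + s).
Proof. by rewrite /hmul /omega /= !mul0mx mxE mulr0 addr0 add0r. Qed.

Lemma hmul00 m (Om : 'M[F]_m) (h : heis F m) : hmul Om (0, 0) h = h.
Proof. by case: h => x s; rewrite hmul0z add0r. Qed.

Definition hsplit m1 m2 (x : heis F (m1 + m2)) : heis F m1 * heis F m2 :=
  ((lsubmx x.1, x.2), (rsubmx x.1, 0)).

Lemma rmap_hsplit m1 m2 (x : heis F (m1 + m2)) :
  rmap (hsplit x).1 (hsplit x).2 = x.
Proof. by case: x => x s; rewrite /rmap /= hsubmxK addr0. Qed.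

Lemma rmapE m1 m2 (x1 : 'rV[F]_m1) z1 (x2 : 'rV[F]_m2) z2 :
  rmap (x1, z1) (x2, z2) = (row_mx x1 x2, z1 + z2).
Proof. by []. Qed.

Lemma submx_sLag n1 m1 n2 m2 (B1 : 'M[F]_(n1, m1)) (B2 : 'M[F]_(n2, m2)) p
   (x1 : 'M_(p, m1)) (x2 : 'M_(p, m2)) :
  (row_mx x1 x2 <= sLag B1 B2)%MS = (x1 <= B1)%MS && (x2 <= B2)%MS.
Proof.
apply/idP/andP.
  case/submxP=> D; rewrite -[D]hsubmxK /sLag mul_row_block !mulmx0 addr0 add0r.
  by case/eq_row_mx => -> ->; rewrite !submxMl.
case=> /submxP [D1 ->] /submxP [D2 ->]; apply/submxP; exists (row_mx D1 D2).
by rewrite /sLag mul_row_block !mulmx0 addr0 add0r.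
Qed.

Lemma sLag_gram n1 m1 n2 m2 k1 k2 (A1 : 'M[F]_(n1, m1)) (A2 : 'M[F]_(n2, m2))
  (C1 : 'M[F]_(k1, m1)) (C2 : 'M[F]_(k2, m2)) (P1 : 'M[F]_m1) (P2 : 'M[F]_m2) :
  sLag A1 A2 *m prodform P1 P2 *m (sLag C1 C2)^T =
  block_mx (A1 *m P1 *m C1^T) 0 0 (A2 *m P2 *m C2^T).
Proof.
rewrite /sLag /prodform tr_block_mx !trmx0 !mulmx_block.
by rewrite !mulmx0 !mul0mx !addr0 !add0r !mul0mx.
Qed.

Lemma frame_sLag n1 m1 n2 m2 (Om1 : 'M[F]_m1) (Om2 : 'M[F]_m2)
  (B1 : 'M[F]_(n1, m1)) (B2 : 'M[F]_(n2, m2)) :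
  frame Om1 B1 -> frame Om2 B2 -> frame (prodform Om1 Om2) (sLag B1 B2).
Proof.
case/andP=> /eqP r1 /eqP i1 /andP [/eqP r2 /eqP i2].
by rewrite /frame sLag_gram i1 i2 block_mx0 eqxx /sLag rank_diag_block_mx r1 r2 eqxx.
Qed.

Lemma general_position_sLag n1 m1 n2 m2 (A1 B1 : 'M[F]_(n1, m1))
    (A2 B2 : 'M[F]_(n2, m2)) :
  general_position A1 B1 -> general_position A2 B2 ->
  general_position (sLag A1 A2) (sLag B1 B2).
Proof.
rewrite /general_position => /row_fullP [D1 e1] /row_fullP [D2 e2]; apply/row_fullP.
move: e1 e2; rewrite -[D1]hsubmxK -[D2]hsubmxK !mul_row_col => e1 e2.
exists (row_mx (block_mx (lsubmx D1) 0 0 (lsubmx D2))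
               (block_mx (rsubmx D1) 0 0 (rsubmx D2))).
rewrite mul_row_col /sLag !mulmx_block !mulmx0 !mul0mx !addr0 !add0r.
by rewrite add_block_mx !addr0 e1 e2 -scalar_mx_block.
Qed.

Lemma sum_sLag (R : nmodType) n1 m1 n2 m2 (M1 : 'M[F]_(n1, m1))
    (M2 : 'M[F]_(n2, m2)) (G : 'rV[F]_(m1 + m2) -> R) :
  \sum_(x : 'rV[F]_(m1 + m2) | (x <= sLag M1 M2)%MS) G x =
  \sum_(x1 : 'rV[F]_m1 | (x1 <= M1)%MS) \sum_(x2 : 'rV[F]_m2 | (x2 <= M2)%MS)
     G (row_mx x1 x2).
Proof.
rewrite pair_big_dep /=.
rewrite (reindex (fun p : 'rV[F]_m1 * 'rV[F]_m2 => row_mx p.1 p.2)) /=.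
  by apply: eq_bigl => p; rewrite submx_sLag.
apply: onW_bij; exists (fun x => (lsubmx x, rsubmx x)) => [[a b]|x] /=.
  by rewrite row_mxKl row_mxKr.
by rewrite hsubmxK.
Qed.

End ProductSpace.

Section LinearAlgebra.
Variable F : fieldType.

Lemma avoid_two_subspaces p1 p2 p3 m (P : 'M[F]_(p1, m)) (A : 'M[F]_(p2, m))
    (B : 'M[F]_(p3, m)) :
  ~~ (P <= A)%MS -> ~~ (P <= B)%MS ->
  exists v : 'rV[F]_m, [&& (v <= P)%MS, ~~ (v <= A)%MS & ~~ (v <= B)%MS].
Proof.
case/row_subPn=> i Hi /row_subPn [j Hj].
have xP := row_sub i P; have yP := row_sub j P.
have [xB|xB] := boolP (row i P <= B)%MS; last by exists (row i P); rewrite xP Hi xB.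
have [yA|yA] := boolP (row j P <= A)%MS; last by exists (row j P); rewrite yP Hj yA.
exists (row i P + row j P); rewrite addmx_sub //=; apply/andP; split.
  apply: contra Hi => H; rewrite -(addrK (row j P) (row i P)).
  by rewrite addmx_sub // -scaleN1r scalemx_sub.
apply: contra Hj => H; rewrite -(addKr (row i P) (row j P)).
by rewrite addmx_sub // -scaleN1r scalemx_sub.
Qed.

Lemma rank_adjoin k m (v : 'rV[F]_m) (W : 'M[F]_(k, m)) :
  ~~ (v <= W)%MS -> \rank (col_mx v W) = (\rank W).+1.
Proof.
move=> vW; apply/eqP; rewrite eqn_leq; apply/andP; split.
  rewrite -addsmxE (leq_trans (mxrank_adds_leqif _ _).1) //.
  by rewrite addnC -(addn1 (\rank W)) leq_add2l rank_leq_row.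
have sW : (W <= col_mx v W)%MS by rewrite -addsmxE addsmxSr.
by rewrite (ltn_leqif (mxrank_leqif_sup sW)) col_mx_sub (negPf vW).
Qed.

Lemma adjoin_transverse k p q m (v : 'rV[F]_m) (W : 'M[F]_(k, m))
    (Y : 'M[F]_(p, m)) (P : 'M[F]_(q, m)) :
  (v <= P)%MS -> (W <= P)%MS -> ~~ (v <= W + Y :&: P)%MS ->
  \rank (W :&: Y) = 0%N -> \rank (col_mx v W :&: Y) = 0%N.
Proof.
move=> vP WP vWYP cWY; apply/eqP; rewrite -leqn0.
apply: leq_trans (mxrankS (_ : (_ <= W :&: Y)%MS)) _; last by rewrite cWY.
apply/row_subP => i; set y := row i _.
have yC : (y <= col_mx v W)%MS := submx_trans (row_sub _ _) (capmxSl _ _).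
have yY : (y <= Y)%MS := submx_trans (row_sub _ _) (capmxSr _ _).
have yP : (y <= P)%MS by apply: submx_trans yC _; rewrite col_mx_sub vP WP.
case/submxP: yC => D; rewrite -[D]hsubmxK mul_row_col.
set c := lsubmx D; set r := rsubmx D => eD.
have [c0|cn0] := eqVneq c 0.
  by rewrite sub_capmx yY andbT eD c0 mul0mx add0r submxMl.
have c00 : c 0 0 != 0.
  by apply: contra cn0 => /eqP e; apply/eqP/matrixP => i0 j0; rewrite !ord1 e mxE.
case/negP: vWYP.
have -> : v = (c 0 0)^-1 *: (y + (- r) *m W).
  have ec : c *m v = c 0 0 *: v by rewrite {1}[c]mx11_scalar mul_scalar_mx.
  by rewrite eD mulNmx addrK ec scalerA mulVf // scale1r.
rewrite scalemx_sub // addmx_sub //; last by rewrite (submx_trans _ (addsmxSl _ _)) ?submxMl.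
by rewrite (submx_trans _ (addsmxSr _ _)) // sub_capmx yY.
Qed.

End LinearAlgebra.

Section LagrangianGeometry.
Variable F : finFieldType.
Variables (n m : nat) (Om : 'M[F]_m).
Hypotheses (hm : m = (n + n)%N) (hskew : Om^T = - Om) (hunit : Om \in unitmx)
  (two_neq0 : (2%:R : F) != 0).

Definition perp k (W : 'M[F]_(k, m)) : 'M[F]_m := kermx (Om *m W^T).

Lemma sub_perp p k (y : 'M[F]_(p, m)) (W : 'M[F]_(k, m)) :
  (y <= perp W)%MS = (y *m Om *m W^T == 0).
Proof. by rewrite sub_kermx mulmxA. Qed.

Lemma gram_tr p k (A : 'M[F]_(p, m)) (B : 'M[F]_(k, m)) :
  (A *m Om *m B^T)^T = - (B *m Om *m A^T).
Proof. by rewrite !trmx_mul trmxK hskew mulNmx mulmxN mulmxA. Qed.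

(* omega is alternating (this uses 2 != 0). *)
Lemma omega_alt (x : 'rV[F]_m) : x *m Om *m x^T = 0.
Proof.
set s := x *m Om *m x^T.
have sT : s^T = s by rewrite {1}[s]mx11_scalar tr_scalar_mx -mx11_scalar.
have : (2%:R : F) *: s == 0 by rewrite scaler_nat mulr2n -{1}sT gram_tr addNr.
by rewrite scaler_eq0 (negPf two_neq0) => /eqP.
Qed.

Lemma rank_perp k (W : 'M[F]_(k, m)) : \rank (perp W) = (m - \rank W)%N.
Proof.
rewrite mxrank_ker; congr (_ - _)%N; rewrite -[RHS]mxrank_tr.
by apply: (eqmxMfull W^T (_ : row_full Om)).1; rewrite row_full_unit.
Qed.

Lemma lagrangian_perp p (X : 'M[F]_(n, m)) (y : 'M[F]_(p, m)) :
  frame Om X -> y *m Om *m X^T = 0 -> (y <= X)%MS.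
Proof.
case/andP=> /eqP rX /eqP iX yO.
have sXK : (X <= perp X)%MS by rewrite sub_perp iX.
have rK : \rank (perp X) = n by rewrite rank_perp rX hm addnK.
have sKX : (perp X <= X)%MS by rewrite -(mxrank_leqif_sup sXK).2 rX rK.
by apply: submx_trans sKX; rewrite sub_perp yO.
Qed.

(* The dimension estimate that drives the greedy construction of a common
   transversal: for every isotropic W of rank k meeting Y trivially, Y
   meets W^perp in dimension at most n - k. *)
Definition transverse_bound (Y : 'M[F]_(n, m)) : Prop :=
  forall k (W : 'M[F]_(k, m)), \rank W = k -> W *m Om *m W^T = 0 ->
    \rank (W :&: Y) = 0%N -> (\rank (Y :&: perp W) <= n - k)%N.

(* The bound holds for the zero space (used to build a first Lagrangian) ... *)
Lemma transverse_bound0 : transverse_bound 0.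
Proof.
by move=> k W _ _ _; rewrite (leq_trans (mxrankS (capmxSl _ _))) // mxrank0.
Qed.

(* ... and for every Lagrangian X: the pairing Kx of X against W has full
   rank k, because its kernel on the W side lies in W :&: X = 0; and
   X :&: W^perp is the image of ker Kx, of dimension n - k. *)
Lemma frame_transverse_bound (X : 'M[F]_(n, m)) :
  frame Om X -> transverse_bound X.
Proof.
move=> fX k W rW iW cWX.
set Kx := X *m Om *m W^T.
have rKx : \rank Kx = k.
  rewrite -mxrank_tr gram_tr mxrank_opp.
  suff /eqP : row_free (W *m Om *m X^T) by [].
  rewrite -kermx_eq0; set U := kermx _.
  have UW : (U *m W <= W :&: X)%MS.
    rewrite sub_capmx submxMl lagrangian_perp // -!mulmxA.
    by have := mulmx_ker (W *m Om *m X^T); rewrite -!mulmxA.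
  have /eqP : U *m W = 0 by apply/eqP; rewrite -mxrank_eq0 -leqn0 -cWX mxrankS.
  by rewrite -(mul0mx _ W) => /eqP/(row_free_inj _) -> //; rewrite /row_free rW.
set C := (X :&: perp W)%MS.
have /submxP [D eD] : (C <= X)%MS by apply: capmxSl.
have DK : (D <= kermx Kx)%MS.
  rewrite sub_kermx /Kx !mulmxA -eD -mulmxA -sub_kermx.
  exact: capmxSr.
apply: leq_trans (mxrankS (_ : (C <= kermx Kx *m X)%MS)) _.
  by rewrite eD submxMr.
by apply: leq_trans (mxrankM_maxl _ _) _; rewrite mxrank_ker rKx.
Qed.

Section Extension.
Variables (k : nat) (W : 'M[F]_(k, m)).
Hypotheses (ltkn : (k < n)%N) (rW : \rank W = k) (iW : W *m Om *m W^T = 0).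

Lemma perp_not_covered (Y : 'M[F]_(n, m)) :
  transverse_bound Y -> \rank (W :&: Y) = 0%N -> ~~ (perp W <= W + Y :&: perp W)%MS.
Proof.
move=> bY cY; apply/negP => /mxrankS; apply/negP; rewrite -ltnNge rank_perp rW.
apply: leq_ltn_trans (mxrank_adds_leqif _ _).1 _.
have -> : (m - k = n + (n - k))%N by rewrite hm -addnBA ?(ltnW ltkn).
by apply: leq_ltn_trans (leq_add (leqnn _) (bY k W rW iW cY)) _; rewrite rW ltn_add2r.
Qed.

(* An isotropic W of rank k < n transverse to X and Z extends to an
   isotropic subspace of rank k + 1 still transverse to X and Z: adjoin a
   vector v of W^perp avoiding both W + (X :&: W^perp) and W + (Z :&: W^perp). *)
Lemma isotropic_extend (X Z : 'M[F]_(n, m)) :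
  transverse_bound X -> transverse_bound Z ->
  \rank (W :&: X) = 0%N -> \rank (W :&: Z) = 0%N ->
  exists W' : 'M[F]_(k.+1, m), [/\ \rank W' = k.+1, W' *m Om *m W'^T = 0,
    \rank (W' :&: X) = 0%N & \rank (W' :&: Z) = 0%N].
Proof.
move=> bX bZ cX cZ.
have [v /and3P [vP vX vZ]] :=
  avoid_two_subspaces (perp_not_covered bX cX) (perp_not_covered bZ cZ).
have WP : (W <= perp W)%MS by rewrite sub_perp iW.
have vW : ~~ (v <= W)%MS by apply: contra vX => /submx_trans; apply; apply: addsmxSl.
have vO : v *m Om *m W^T = 0 by apply/eqP; rewrite -sub_perp.
have Wv : W *m Om *m v^T = 0 by apply: trmx_inj; rewrite gram_tr vO oppr0 trmx0.
have iC : col_mx v W *m Om *m (col_mx v W)^T = 0.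
  rewrite tr_col_mx !mul_col_mx !mul_mx_row omega_alt vO Wv iW !row_mx0.
  by apply/matrixP=> i j; rewrite !mxE; case: splitP => *; rewrite mxE.
exists (col_mx v W); split=> //.
- by rewrite rank_adjoin // rW.
- exact: adjoin_transverse vP WP vX cX.
- exact: adjoin_transverse vP WP vZ cZ.
Qed.

End Extension.

Lemma exists_common_transverse (X Z : 'M[F]_(n, m)) :
  transverse_bound X -> transverse_bound Z ->
  exists W : 'M[F]_(n, m),
    [/\ frame Om W, \rank (W :&: X) = 0%N & \rank (W :&: Z) = 0%N].
Proof.
move=> bX bZ.
suff /(_ n (leqnn n)) [W [rW iW cX cZ]] : forall k, (k <= n)%N ->
    exists W : 'M[F]_(k, m), [/\ \rank W = k, W *m Om *m W^T = 0,
      \rank (W :&: X) = 0%N & \rank (W :&: Z) = 0%N].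
  by exists W; rewrite /frame rW iW !eqxx.
elim=> [_|k IH ltkn].
  have cap0 Y : \rank ((0 : 'M[F]_(0, m)) :&: Y) = 0%N.
    by apply/eqP; rewrite -leqn0 (leq_trans (mxrankS (capmxSl _ _))) // mxrank0.
  by exists 0; rewrite mxrank0 !mul0mx !cap0.
have [W [rW iW cX cZ]] := IH (ltnW ltkn).
exact: (isotropic_extend ltkn rW iW bX bZ cX cZ).
Qed.

Lemma exists_frame : exists X : 'M[F]_(n, m), frame Om X.
Proof.
have [W [fW _ _]] := exists_common_transverse transverse_bound0 transverse_bound0.
by exists W.
Qed.

Lemma general_position_cap (A B : 'M[F]_(n, m)) :
  frame Om A -> frame Om B -> \rank (A :&: B) = 0%N -> general_position A B.
Proof.
case/andP=> /eqP rA _ /andP [/eqP rB _] cAB.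
have := mxrank_sum_cap A B; rewrite cAB addn0 rA rB -hm.
by rewrite /general_position; have [-> _] := addsmxE A B => ->.
Qed.

Lemma exists_transversal (X Z : 'M[F]_(n, m)) : frame Om X -> frame Om Z ->
  exists Y, [/\ frame Om Y, general_position Z Y & general_position Y X].
Proof.
move=> fX fZ.
have [W [fW cX cZ]] := exists_common_transverse
  (frame_transverse_bound fX) (frame_transverse_bound fZ).
exists W; split=> //; last exact: general_position_cap.
by apply: general_position_cap; rewrite // capmxC.
Qed.

End LagrangianGeometry.

Module FieldUnits.
Import fingroup cyclic.

Lemma unit_generator (F : finFieldType) :
  exists g : F, forall x : F, x != 0 -> exists i : nat, x = g ^+ i.
Proof.
have /cyclicP [u Hu] := field_unit_group_cyclic [group of [set: {unit F}]].
exists (FinRing.uval u) => x x0.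
have xu : x \is a GRing.unit by rewrite unitfE.
have : FinRing.Unit xu \in <[u]>%g by rewrite -Hu inE.
by case/cycleP=> i Hi; exists i; rewrite -FinRing.val_unitX -Hi.
Qed.

End FieldUnits.

Section Legendre.
Variable F : finFieldType.

Definition issq (a : F) : bool := [exists b : F, b ^+ 2 == a].

Lemma issqP a : reflect (exists b, b ^+ 2 = a) (issq a).
Proof. by apply: (iffP existsP) => [[b /eqP]|[b <-]]; exists b. Qed.

Lemma issqMl (a b : F) : a != 0 -> issq a -> issq (a * b) = issq b.
Proof.
move=> a0 /issqP [c ec]; have c0 : c != 0 by apply: contraNneq a0 => c0; rewrite -ec c0 expr0n.
apply/issqP/issqP => [[e ee]|[d ed]]; last by exists (c * d); rewrite exprMn ec ed.
by exists (e / c); rewrite expr_div_n ee -ec mulrC mulKf // expf_neq0.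
Qed.

(* The product of two non-squares is a square: both are odd powers of a
   generator of the cyclic group of units. *)
Lemma issqM_nonsq (a b : F) : a != 0 -> b != 0 -> ~~ issq a -> ~~ issq b ->
  issq (a * b).
Proof.
have [g Hg] := FieldUnits.unit_generator F.
have sq_even i : issq (g ^+ i.*2).
  by apply/issqP; exists (g ^+ i); rewrite -exprM -mul2n mulnC.
have odd_pow x : x != 0 -> ~~ issq x -> exists i, x = g ^+ i.*2.+1.
  move=> x0; have [i ->] := Hg x x0; rewrite -(odd_double_half i).
  by case: (odd i) => /=; [exists i./2; rewrite add1n | rewrite add0n sq_even].
move=> a0 b0 /(odd_pow a a0) [i ->] /(odd_pow b b0) [j ->].
by rewrite -exprD addSn addnS -doubleD -doubleS sq_even.
Qed.

Lemma legendreE (a : F) :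
  legendre a = if a == 0 then 0 else if issq a then 1 else -1.
Proof. by []. Qed.

Lemma legendreM (a b : F) : legendre (a * b) = legendre a * legendre b.
Proof.
rewrite !legendreE mulf_eq0.
have [->|a0] := eqVneq a 0; first by rewrite /= mul0r.
have [->|b0] := eqVneq b 0; first by rewrite /= mulr0.
have [sa|na] := boolP (issq a); first by rewrite issqMl // mul1r.
have [sb|nb] := boolP (issq b); first by rewrite mulrC issqMl // (negPf na) mulr1.
by rewrite issqM_nonsq // mulrNN mulr1.
Qed.
End Legendre.

Section TensorFactorization.
Variables (F : finFieldType) (psi : F -> algC).

(* Elements of H_{L1°}(V1) (x) H_{L2°}(V2) are determined by their values on
   the image of r; [rjoin w] is the function on H(V1 x V2) they come from. *)
Definition rjoin m1 m2 (w : heis F m1 -> heis F m2 -> algC) : heis F (m1 + m2) -> algC :=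
  fun x => w (hsplit x).1 (hsplit x).2.

Lemma inHL_psi0 n m (Om : 'M[F]_m) (B : 'M[F]_(n, m)) f h :
  inHL psi Om B f -> psi 0 * f h = f h.
Proof. by move=> Hf; rewrite -(Hf 0 0 h (sub0mx _ _)) !hmul00. Qed.

Lemma inHL2_rmap n1 m1 n2 m2 (Om1 : 'M[F]_m1) (Om2 : 'M[F]_m2)
    (B1 : 'M[F]_(n1, m1)) (B2 : 'M[F]_(n2, m2)) f :
  inHL psi (prodform Om1 Om2) (sLag B1 B2) f ->
  inHL2 psi Om1 Om2 B1 B2 (fun a b => f (rmap a b)).
Proof.
move=> Hf; split=> [h2 l z h lB | h1 l z h lB].
  rewrite -{1}[h2](hmul00 Om2) -{1}[h2](hmul00 Om2) !rmapM !rmapE row_mx0 !addr0.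
  by rewrite Hf // submx_sLag lB sub0mx.
rewrite -{1}[h1](hmul00 Om1) -{1}[h1](hmul00 Om1) !rmapM !rmapE row_mx0 !add0r.
by rewrite Hf // submx_sLag lB sub0mx.
Qed.

Section Join.
Variables (n1 m1 n2 m2 : nat) (Om1 : 'M[F]_m1) (Om2 : 'M[F]_m2).
Variables (B1 : 'M[F]_(n1, m1)) (B2 : 'M[F]_(n2, m2)).
Variable w : heis F m1 -> heis F m2 -> algC.
Hypothesis Hw : inHL2 psi Om1 Om2 B1 B2 w.

(* [rjoin w] restricts along r to w: the central coordinate may be moved
   from the second factor to the first. *)
Lemma rjoin_rmap h1 h2 : rjoin w (rmap h1 h2) = w h1 h2.
Proof.
case: Hw => W1 W2; case: h1 h2 => [a1 s1] [a2 s2].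
rewrite /rjoin /rmap /= row_mxKl row_mxKr.
have e2 := W2 (a1, s1) 0 s2 (a2, 0) (sub0mx _ _).
have e1 := W1 (a2, 0) 0 s2 (a1, s1) (sub0mx _ _).
rewrite hmul00 hmul0z addr0 in e2; rewrite hmul00 hmul0z in e1.
by rewrite e2 addrC e1.
Qed.

Lemma inHL_rjoin : inHL psi (prodform Om1 Om2) (sLag B1 B2) (rjoin w).
Proof.
case: (Hw) => W1 W2 l z [x s] lB.
have /andP [l1B l2B] : (lsubmx l <= B1)%MS && (rsubmx l <= B2)%MS.
  by rewrite -submx_sLag hsubmxK.
have split_x : ((x, s) : heis F (m1 + m2)) = rmap (lsubmx x, s) (rsubmx x, 0).
  by rewrite rmapE hsubmxK addr0.
have split_l : ((l, 0) : heis F (m1 + m2)) = rmap (lsubmx l, 0) (rsubmx l, 0).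
  by rewrite rmapE hsubmxK addr0.
have split_z : ((0, z) : heis F (m1 + m2)) = rmap (0, z) (0, 0).
  by rewrite rmapE row_mx0 addr0.
rewrite split_x split_l split_z -!rmapM !rjoin_rmap W1 // W2 //.
by rewrite (inHL_psi0 _ (W2 _)).
Qed.

End Join.
End TensorFactorization.

Section TwistedSums.
Variables (F : finFieldType) (psi : F -> algC).

Lemma T0Z n m (Om : 'M[F]_m) (M L : 'M[F]_(n, m)) (c : algC) g h :
  T0 psi Om M L (fun b => c * g b) h = c * T0 psi Om M L g h.
Proof. by rewrite /T0 -mulr_sumr mulrCA. Qed.

Lemma T0_comm n1 m1 n2 m2 (Om1 : 'M[F]_m1) (Om2 : 'M[F]_m2)
    (M1 L1 : 'M[F]_(n1, m1)) (M2 L2 : 'M[F]_(n2, m2))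
    (G : heis F m1 -> heis F m2 -> algC) h1 h2 :
  T0 psi Om2 M2 L2 (fun b => T0 psi Om1 M1 L1 (fun a => G a b) h1) h2 =
  T0 psi Om1 M1 L1 (fun a => T0 psi Om2 M2 L2 (G a) h2) h1.
Proof.
rewrite /T0 -[in LHS]mulr_sumr -[in RHS]mulr_sumr mulrCA.
by rewrite (exchange_big _ _ _ (fun x : 'rV_m2 => (x <= M2)%MS)).
Qed.

Lemma sign_sq (k : nat) (x : F) : (-1) ^+ k * ((-1) ^+ k * x) = x.
Proof. by rewrite mulrA -exprD addnn -mul2n exprM sqrrN !expr1n mul1r. Qed.

(* T^0 for product Lagrangians is the tensor product of the T^0's: the sum
   over M1 x M2 splits, the Gram determinant and Legendre symbol are
   multiplicative, and (G1/q)^(n1+n2) = (G1/q)^n1 (G1/q)^n2. *)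
Lemma T0_sLag n1 m1 n2 m2 (Om1 : 'M[F]_m1) (Om2 : 'M[F]_m2)
    (M1 L1 : 'M[F]_(n1, m1)) (M2 L2 : 'M[F]_(n2, m2)) (f : heis F (m1 + m2) -> algC)
    h1 h2 :
  T0 psi (prodform Om1 Om2) (sLag M1 M2) (sLag L1 L2) f (rmap h1 h2) =
  tensT (T0 psi Om1) (T0 psi Om2) M1 L1 M2 L2 (fun a b => f (rmap a b)) h1 h2.
Proof.
rewrite /tensT /T0 sum_sLag /owedge sLag_gram det_ublock !sign_sq legendreM exprD.
rewrite -[in RHS]mulr_sumr mulrACA -!mulrA; do 4 congr (_ * _).
apply: eq_bigr => x1 _; apply: eq_bigr => x2 _.
by rewrite rmapM rmapE addr0.
Qed.

Definition T0via n m (Om : 'M[F]_m) (Y : 'M[F]_(n, m)) : triv F n m :=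
  fun Z X f => T0 psi Om Z Y (T0 psi Om Y X f).

Lemma T0viaZ n m (Om : 'M[F]_m) (Y Z X : 'M[F]_(n, m)) (c : algC) g h :
  T0via Om Y Z X (fun b => c * g b) h = c * T0via Om Y Z X g h.
Proof.
rewrite /T0via -T0Z; congr (T0 _ _ _ _ _ h).
by apply: functional_extensionality => b; rewrite T0Z.
Qed.

Lemma T0via_sLag n1 m1 n2 m2 (Om1 : 'M[F]_m1) (Om2 : 'M[F]_m2)
    (Y1 Z1 X1 : 'M[F]_(n1, m1)) (Y2 Z2 X2 : 'M[F]_(n2, m2))
    (f : heis F (m1 + m2) -> algC) h1 h2 :
  T0via (prodform Om1 Om2) (sLag Y1 Y2) (sLag Z1 Z2) (sLag X1 X2) f (rmap h1 h2) =
  tensT (T0via Om1 Y1) (T0via Om2 Y2) Z1 X1 Z2 X2 (fun a b => f (rmap a b)) h1 h2.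
Proof.
rewrite /T0via T0_sLag.
have -> : (fun a b => T0 psi (prodform Om1 Om2) (sLag Y1 Y2) (sLag X1 X2) f (rmap a b)) =
    tensT (T0 psi Om1) (T0 psi Om2) Y1 X1 Y2 X2 (fun a b => f (rmap a b)).
  by do 2 apply: functional_extensionality => ?; rewrite T0_sLag.
rewrite /tensT; congr (T0 _ _ _ _ _ h1); apply: functional_extensionality => a; by rewrite T0_comm.
Qed.

End TwistedSums.

Section CanonicalTrivialization.
Variables (F : finFieldType) (psi : F -> algC).
Hypothesis two_neq0 : (2%:R : F) != 0.

Lemma symplectic_frame n m (Om : 'M[F]_m) :
  symplectic n Om -> exists X : 'M[F]_(n, m), frame Om X.
Proof. by case=> hm hskew _ hunit; apply: exists_frame. Qed.

Lemma symplectic_transversal n m (Om : 'M[F]_m) (X Z : 'M[F]_(n, m)) :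
  symplectic n Om -> frame Om X -> frame Om Z ->
  exists Y, [/\ frame Om Y, general_position Z Y & general_position Y X].
Proof. by case=> hm hskew _ hunit; apply: exists_transversal. Qed.

Lemma canonical_triv_via n m (Om : 'M[F]_m) (T : triv F n m) (X Y Z : 'M[F]_(n, m)) f :
  canonical_triv psi Om T -> frame Om X -> frame Om Y -> frame Om Z ->
  general_position Z Y -> general_position Y X -> inHL psi Om X f ->
  T Z X f = T0via psi Om Y Z X f.
Proof.
case=> pres _ _ [_ comp] gen fX fY fZ gZY gYX Hf.
have HY : inHL psi Om Y (T0 psi Om Y X f) by rewrite -gen //; apply: pres.
by rewrite -(comp Z Y X) // (gen Y X) // (gen Z Y).
Qed.

Lemma inHV_determined n m (Om : 'M[F]_m) (T : triv F n m) v w (C B : 'M[F]_(n, m)) :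
  inHV psi Om T v -> inHV psi Om T w -> frame Om C -> frame Om B ->
  v C = w C -> v B = w B.
Proof. by case=> _ cv [_ cw] fC fB eC; rewrite -(cv B C) // -(cw B C) // eC. Qed.

Lemma inHV_transport n m (Om : 'M[F]_m) (T : triv F n m) (C : 'M[F]_(n, m)) f :
  canonical_triv psi Om T -> frame Om C -> inHL psi Om C f ->
  inHV psi Om T (fun B => T B C f).
Proof. by case=> pres _ _ [_ comp] _ fC Hf; split=> [B fB | M L fM fL]; auto. Qed.

Section Product.
Variables (n1 m1 n2 m2 : nat) (Om1 : 'M[F]_m1) (Om2 : 'M[F]_m2).
Variables (T1 : triv F n1 m1) (T2 : triv F n2 m2) (T12 : triv F (n1 + n2) (m1 + m2)).
Hypotheses (hS1 : symplectic n1 Om1) (hS2 : symplectic n2 Om2)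
  (hc1 : canonical_triv psi Om1 T1) (hc2 : canonical_triv psi Om2 T2)
  (hc12 : canonical_triv psi (prodform Om1 Om2) T12).

Lemma tensT_via (X1 Y1 Z1 : 'M[F]_(n1, m1)) (X2 Y2 Z2 : 'M[F]_(n2, m2)) w :
  frame Om1 X1 -> frame Om1 Y1 -> frame Om1 Z1 ->
  frame Om2 X2 -> frame Om2 Y2 -> frame Om2 Z2 ->
  general_position Z1 Y1 -> general_position Y1 X1 ->
  general_position Z2 Y2 -> general_position Y2 X2 ->
  inHL2 psi Om1 Om2 X1 X2 w ->
  tensT T1 T2 Z1 X1 Z2 X2 w = tensT (T0via psi Om1 Y1) (T0via psi Om2 Y2) Z1 X1 Z2 X2 w.
Proof.
move=> fX1 fY1 fZ1 fX2 fY2 fZ2 gZY1 gYX1 gZY2 gYX2 [W1 W2].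
apply: functional_extensionality => h1; apply: functional_extensionality => h2.
rewrite /tensT.
have -> : (fun a => T2 Z2 X2 (w a) h2) = (fun a => T0via psi Om2 Y2 Z2 X2 (w a) h2).
  by apply: functional_extensionality => a; rewrite (canonical_triv_via hc2 fX2 fY2).
rewrite (canonical_triv_via hc1 fX1 fY1 fZ1 gZY1 gYX1) // => l z a lX.
have -> : w (hmul Om1 (0, z) (hmul Om1 (l, 0) a)) = (fun b => psi z * w a b).
  by apply: functional_extensionality => b; rewrite W1.
by rewrite T0viaZ.
Qed.

Lemma canonical_triv_sLag (X1 Z1 : 'M[F]_(n1, m1)) (X2 Z2 : 'M[F]_(n2, m2)) f h1 h2 :
  frame Om1 X1 -> frame Om1 Z1 -> frame Om2 X2 -> frame Om2 Z2 ->
  inHL psi (prodform Om1 Om2) (sLag X1 X2) f ->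
  T12 (sLag Z1 Z2) (sLag X1 X2) f (rmap h1 h2) =
  tensT T1 T2 Z1 X1 Z2 X2 (fun a b => f (rmap a b)) h1 h2.
Proof.
move=> fX1 fZ1 fX2 fZ2 Hf.
have [Y1 [fY1 gZY1 gYX1]] := symplectic_transversal hS1 fX1 fZ1.
have [Y2 [fY2 gZY2 gYX2]] := symplectic_transversal hS2 fX2 fZ2.
rewrite (canonical_triv_via hc12 (Y := sLag Y1 Y2)) ?frame_sLag ?general_position_sLag //.
by rewrite T0via_sLag (tensT_via fX1 fY1 fZ1 fX2 fY2 fZ2) //; apply: inHL2_rmap.
Qed.

Lemma alpha_inHT v :
  inHV psi (prodform Om1 Om2) T12 v -> inHT psi Om1 Om2 T1 T2 (alpha v).
Proof.
case=> Hv cv; split=> [B1 B2 fB1 fB2 | M1 L1 M2 L2 fM1 fL1 fM2 fL2].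
  by apply: inHL2_rmap; apply/Hv/frame_sLag.
apply: functional_extensionality => h1; apply: functional_extensionality => h2.
rewrite /alpha -(cv (sLag M1 M2) (sLag L1 L2)) ?frame_sLag //.
by rewrite canonical_triv_sLag //; apply/Hv/frame_sLag.
Qed.

(* alpha is injective: r is onto H(V1 x V2), so alpha v recovers v at a
   product Lagrangian, hence everywhere. *)
Lemma alpha_injective v w :
  inHV psi (prodform Om1 Om2) T12 v -> inHV psi (prodform Om1 Om2) T12 w ->
  (forall B1 B2, frame Om1 B1 -> frame Om2 B2 -> alpha v B1 B2 = alpha w B1 B2) ->
  forall B, frame (prodform Om1 Om2) B -> v B = w B.
Proof.
move=> Hv Hw eqa B fB.
have [C1 fC1] := symplectic_frame hS1; have [C2 fC2] := symplectic_frame hS2.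
apply: (inHV_determined Hv Hw (frame_sLag fC1 fC2)) => //.
apply: functional_extensionality => x; rewrite -(rmap_hsplit x).
by have := eqa C1 C2 fC1 fC2 => /(congr1 (fun g => g (hsplit x).1 (hsplit x).2)).
Qed.

(* alpha is surjective: extend rjoin (w C1 C2) from s(C1, C2) to a family. *)
Lemma alpha_surjective w : inHT psi Om1 Om2 T1 T2 w ->
  exists v, inHV psi (prodform Om1 Om2) T12 v /\
    forall B1 B2, frame Om1 B1 -> frame Om2 B2 -> alpha v B1 B2 = w B1 B2.
Proof.
case=> Hw cw.
have [C1 fC1] := symplectic_frame hS1; have [C2 fC2] := symplectic_frame hS2.
have HwC := Hw C1 C2 fC1 fC2.
exists (fun B => T12 B (sLag C1 C2) (rjoin (w C1 C2))); split.
  by apply: inHV_transport; rewrite ?frame_sLag //; apply: inHL_rjoin HwC.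
move=> B1 B2 fB1 fB2.
apply: functional_extensionality => h1; apply: functional_extensionality => h2.
rewrite /alpha canonical_triv_sLag //; last exact: inHL_rjoin HwC.
have -> : (fun a b => rjoin (w C1 C2) (rmap a b)) = w C1 C2.
  by do 2 apply: functional_extensionality => ?; rewrite (rjoin_rmap HwC).
by rewrite cw.
Qed.

End Product.
End CanonicalTrivialization.

Section Naturality.
Variable F : finFieldType.

(* Naturality: alpha commutes with H(f1 x f2) and H(f1) (x) H(f2), because
   r and s are compatible with block-diagonal maps. *)
Lemma alpha_Hfun n1 m1 n2 m2 (g1 : 'M[F]_m1) (g2 : 'M[F]_m2)
    (v : 'M[F]_(n1 + n2, m1 + m2) -> heis F (m1 + m2) -> algC) B1 B2 :
  alpha (Hfun (block_mx g1 0 0 g2) v) B1 B2 = Hfun2 g1 g2 (alpha v) B1 B2.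
Proof.
apply: functional_extensionality => h1; apply: functional_extensionality => h2.
rewrite /alpha /Hfun /Hfun2 /rmap /= /sLag mul_row_block mulmx_block.
by rewrite !mulmx0 !mul0mx !addr0 !add0r.
Qed.

Lemma invmx_block_diag m1 m2 (g1 : 'M[F]_m1) (g2 : 'M[F]_m2) :
  g1 \in unitmx -> g2 \in unitmx ->
  invmx (block_mx g1 0 0 g2) = block_mx (invmx g1) 0 0 (invmx g2).
Proof.
move=> u1 u2.
have e : block_mx (invmx g1) 0 0 (invmx g2) *m block_mx g1 0 0 g2 = 1%:M.
  rewrite mulmx_block !mulmx0 !mul0mx !addr0 !add0r !mulVmx //.
  by rewrite -scalar_mx_block.
have [_ uA] := mulmx1_unit e.
by rewrite -[invmx _]mul1mx -e -mulmxA mulmxV // mulmx1.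
Qed.

Lemma alpha_rho n1 m1 n2 m2 (Om1 : 'M[F]_m1) (Om2 : 'M[F]_m2)
    (g1 : 'M[F]_m1) (g2 : 'M[F]_m2)
    (v : 'M[F]_(n1 + n2, m1 + m2) -> heis F (m1 + m2) -> algC) B1 B2 :
  Sp Om1 g1 -> Sp Om2 g2 ->
  alpha (rho (block_mx g1 0 0 g2) v) B1 B2 = rho2 g1 g2 (alpha v) B1 B2.
Proof. by case/andP=> u1 _ /andP [u2 _]; rewrite /rho invmx_block_diag // alpha_Hfun. Qed.

End Naturality.

Theorem mainTheorem10 (F : finFieldType) (psi : F -> algC) (n1 n2 m1 m2 : nat)
    (Om1 : 'M[F]_m1) (Om2 : 'M[F]_m2)
    (T1 : triv F n1 m1) (T2 : triv F n2 m2) (T12 : triv F (n1 + n2) (m1 + m2)) :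
  (2%:R : F) != 0 ->
  nontriv_add_char psi ->
  symplectic n1 Om1 -> symplectic n2 Om2 ->
  canonical_triv psi Om1 T1 -> canonical_triv psi Om2 T2 ->
  canonical_triv psi (prodform Om1 Om2) T12 ->
  [/\
   (forall (a : algC) (v w : 'M[F]_(n1 + n2, m1 + m2) -> heis F (m1 + m2) -> algC)
           (B1 : 'M[F]_(n1, m1)) (B2 : 'M[F]_(n2, m2)) (h1 : heis F m1) (h2 : heis F m2),
      alpha (fun B x => a * v B x + w B x) B1 B2 h1 h2
      = a * alpha v B1 B2 h1 h2 + alpha w B1 B2 h1 h2),
   (forall v, inHV psi (prodform Om1 Om2) T12 v -> inHT psi Om1 Om2 T1 T2 (alpha v)),
   (forall v w, inHV psi (prodform Om1 Om2) T12 v -> inHV psi (prodform Om1 Om2) T12 w ->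
      (forall B1 B2, frame Om1 B1 -> frame Om2 B2 -> alpha v B1 B2 = alpha w B1 B2) ->
      forall B, frame (prodform Om1 Om2) B -> v B = w B),
   (forall w, inHT psi Om1 Om2 T1 T2 w ->
      exists v, inHV psi (prodform Om1 Om2) T12 v /\
        forall B1 B2, frame Om1 B1 -> frame Om2 B2 -> alpha v B1 B2 = w B1 B2) &
   ((forall (Om1' : 'M[F]_m1) (Om2' : 'M[F]_m2) (T1' : triv F n1 m1) (T2' : triv F n2 m2)
           (T12' : triv F (n1 + n2) (m1 + m2)) (g1 : 'M[F]_m1) (g2 : 'M[F]_m2),
      symplectic n1 Om1' -> symplectic n2 Om2' ->
      canonical_triv psi Om1' T1' -> canonical_triv psi Om2' T2' ->
      canonical_triv psi (prodform Om1' Om2') T12' ->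
      symp_iso Om1 Om1' g1 -> symp_iso Om2 Om2' g2 ->
      forall v', inHV psi (prodform Om1' Om2') T12' v' ->
      forall B1 B2, frame Om1 B1 -> frame Om2 B2 ->
        alpha (Hfun (block_mx g1 0 0 g2) v') B1 B2 = Hfun2 g1 g2 (alpha v') B1 B2) /\
   (forall (g1 : 'M[F]_m1) (g2 : 'M[F]_m2), Sp Om1 g1 -> Sp Om2 g2 ->
      forall v, inHV psi (prodform Om1 Om2) T12 v ->
      forall B1 B2, frame Om1 B1 -> frame Om2 B2 ->
        alpha (rho (block_mx g1 0 0 g2) v) B1 B2 = rho2 g1 g2 (alpha v) B1 B2))].
Proof.
move=> two_neq0 _ hS1 hS2 hc1 hc2 hc12; split.
- by [].
- exact: alpha_inHT hc12.
- exact: alpha_injective.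
- exact: (alpha_surjective two_neq0 hS1 hS2 hc1 hc2 hc12).
- split=> [Om1' Om2' T1' T2' T12' g1 g2 _ _ _ _ _ _ _ v' _ B1 B2 _ _ |
           g1 g2 sp1 sp2 v _ B1 B2 _ _]; first exact: alpha_Hfun.
  exact: alpha_rho sp1 sp2.
Qed.
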